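(* Let $n\ge0$. Among the elements of $R$ whose binary representation has length $2n+4$, exactly one has binary representation beginning with $1000$, namely $[1000(10)^n]_2$; moreover $[1000(10)^n]_2$ is the smallest element of $R$ whose binary representation has length $2n+4$.
   Context: Stern's sequence $(a(n))_{n\ge0}$: $a(0)=0$, $a(1)=1$, $a(2n)=a(n)$, $a(2n+1)=a(n)+a(n+1)$; $s(n)=a(n+1)$. $R$ is the set of record-setters of $s$, i.e. indices $v\ge0$ with $s(i)<s(v)$ for all $i<v$. Binary representations have no leading zeros. For a binary string $x$, $[x]_2$ is the integer it represents in base 2; $x^i$ denotes $i$-fold concatenation. *)

From mathcomp Require Import all_boot.
Set Implicit Arguments. Unset Strict Implicit. Unset Printing Implicit Defensive.

(* Stern's diatomic sequence a(0)=0, a(1)=1, a(2n)=a(n), a(2n+1)=a(n)+a(n+1),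
   computed with fuel (fuel n suffices for argument n). *)
Fixpoint stern_aux (fuel n : nat) : nat :=
  match fuel with
  | 0 => 0
  | f.+1 =>
    if n <= 1 then n
    else if odd n then stern_aux f n./2 + stern_aux f (n./2).+1
    else stern_aux f n./2
  end.

Definition stern_a (n : nat) : nat := stern_aux n.+1 n.

Definition stern_s (n : nat) : nat := stern_a n.+1.

Definition record_setter (v : nat) : Prop := forall i, i < v -> stern_s i < stern_s v.

(* binary representation (no leading zeros), most significant bit first;
   binrep 0 = [::] *)
Fixpoint binrep_aux (fuel n : nat) : seq bool :=
  match fuel with
  | 0 => [::]
  | f.+1 => if n == 0 then [::] else rcons (binrep_aux f n./2) (odd n)
  end.
Definition binrep (n : nat) : seq bool := binrep_aux n n.

Definition binval (x : seq bool) : nat := foldl (fun (acc : nat) (b : bool) => acc.*2 + nat_of_bool b) 0 x.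

Definition w1000 (n : nat) : seq bool :=
  [:: true; false; false; false] ++ flatten (nseq n [:: true; false]).

Section Sanity.
Example ex_a : [seq stern_a i | i <- iota 0 10] = [:: 0;1;1;2;1;3;2;3;1;4]. Proof. by []. Qed.
Example ex_b : binrep 6 = [:: true; true; false]. Proof. by []. Qed.
Example ex_c : binval (w1000 1) = 34. Proof. by []. Qed.
Example ex_d : binrep 34 = w1000 1. Proof. by []. Qed.
End Sanity.

From mathcomp Require Import all_boot zify.

(* Reading the binary digits of v from the most significant one, the pair
   (a(v), a(v+1)) evolves by (p, q) -> (p + q, q) on a 1 and (p, q) -> (p, p + q)
   on a 0, so after L further digits both entries are at most
   F_(L+1) max(p, q) + F_L min(p, q).  Hence s(i) <= F_(2n+4) for every
   i < 2^(2n+3), with equality at i = [(10)^(n+1)0]_2.  After the prefix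
   1000(10)^k the pair is (F_(2k+1) + 3F_(2k), F_(2k) + 4F_(2k+1)); among the
   continuations of length 2j, (10)^j yields the largest s, and every continuation
   of smaller value yields at most F_(2(k+j)+4), which is below the value
   F_(2(k+j)) + 4F_(2(k+j)+1) reached by (10)^j.  So among
   the strings 1000x of length 2n+4 only 1000(10)^n can be a record, it is one,
   and every smaller index of that length is beaten by [(10)^(n+1)0]_2. *)

Lemma stern_aux_fuel f g n : n < f -> n < g -> stern_aux f n = stern_aux g n.
Proof.
elim: f g n => [|f IH] [|g] n //= n_lt_f n_lt_g.
case: ifP => // n_gt1; case: ifP => n_odd.
- rewrite (IH g n./2) ?(IH g n./2.+1) //; lia.
- rewrite (IH g n./2) //; lia.
Qed.

Lemma stern_auxS f n : stern_aux f.+1 n =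
  if n <= 1 then n
  else if odd n then stern_aux f n./2 + stern_aux f n./2.+1
  else stern_aux f n./2.
Proof. by []. Qed.

Lemma stern_a_even m : stern_a m.*2 = stern_a m.
Proof.
case: m => [|m] //; rewrite /stern_a stern_auxS (_ : _ <= 1 = false); last by lia.
by rewrite odd_double doubleK; apply: stern_aux_fuel; lia.
Qed.

Lemma stern_a_odd m : stern_a m.*2.+1 = stern_a m + stern_a m.+1.
Proof.
case: m => [|m] //; rewrite /stern_a stern_auxS (_ : _ <= 1 = false); last by lia.
rewrite (_ : odd _ = true); last by rewrite -addn1 oddD odd_double.
rewrite -[_.*2.+1]/(true + _) half_bit_double.
by congr (_ + _); apply: stern_aux_fuel; lia.
Qed.

Lemma binval_rcons w b : binval (rcons w b) = (binval w).*2 + b.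
Proof. by rewrite /binval foldl_rcons. Qed.

Lemma binval_cat u w : binval (u ++ w) = binval u * 2 ^ size w + binval w.
Proof.
elim/last_ind: w => [|w b IH]; first by rewrite cats0 expn0 muln1 addn0.
by rewrite -rcons_cat !binval_rcons IH size_rcons expnS; lia.
Qed.

Lemma binval_lt w : binval w < 2 ^ size w.
Proof.
elim/last_ind: w => [|w b IH] //.
by rewrite binval_rcons size_rcons expnS; case: b => /=; lia.
Qed.

Lemma binrep_aux_fuel f g n : n <= f -> n <= g -> binrep_aux f n = binrep_aux g n.
Proof.
elim: f g n => [|f IH] [|g] n //= n_le_f n_le_g; try by have -> : n = 0 by lia.
by case: eqP => // _; rewrite (IH g) //; lia.
Qed.

Lemma binrepS n : 0 < n -> binrep n = rcons (binrep n./2) (odd n).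
Proof.
case: n => [|n] // _; rewrite /binrep /=.
by congr rcons; apply: binrep_aux_fuel; lia.
Qed.

Lemma binrepK : cancel binrep binval.
Proof.
move=> n; elim/ltn_ind: n => -[|n] IH //.
rewrite binrepS // binval_rcons IH; last by lia.
by rewrite -[RHS](odd_double_half n.+1) addnC.
Qed.

Lemma binvalK_true w : binrep (binval (true :: w)) = true :: w.
Proof.
elim/last_ind: w => [|w b IH] //.
have pos : 0 < binval (true :: w).
  by rewrite -cat1s binval_cat addn_gt0 muln_gt0 expn_gt0.
rewrite -rcons_cons binval_rcons binrepS; last by lia.
by rewrite addnC half_bit_double IH oddD odd_double oddb addbF.
Qed.

Lemma pow2_size_binrep_le v : 0 < v -> 2 ^ size (binrep v) <= v.*2.
Proof.
elim/ltn_ind: v => v IH v_gt0; rewrite binrepS // size_rcons expnS.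
have [->|half_gt0] := posnP v./2; first by rewrite /binrep /=; lia.
have := IH v./2 ltac:(lia) half_gt0; lia.
Qed.

Lemma size_binrep_le i L : i < 2 ^ L -> size (binrep i) <= L.
Proof.
have [->|i_gt0] := posnP i; first by rewrite /binrep.
move=> i_lt; rewrite -ltnS -(@ltn_exp2l 2) // expnS.
by have := pow2_size_binrep_le i i_gt0; lia.
Qed.

Lemma binrep_size_range v m : size (binrep v) = m.+1 -> 2 ^ m <= v < 2 ^ m.+1.
Proof.
have [->|v_gt0] := posnP v; first by rewrite /binrep.
move=> size_v; have := pow2_size_binrep_le v v_gt0; have := binval_lt (binrep v).
by rewrite binrepK size_v expnS; lia.
Qed.

Fixpoint bits L t : seq bool :=
  if L is L'.+1 then rcons (bits L' t./2) (odd t) else [::].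

Lemma size_bits L t : size (bits L t) = L.
Proof. by elim: L t => [|L IH] t //=; rewrite size_rcons IH. Qed.

Lemma bitsK L t : t < 2 ^ L -> binval (bits L t) = t.
Proof.
elim: L t => [|L IH] t /=; first by case: t.
rewrite expnS binval_rcons => t_lt; rewrite IH; last by lia.
by rewrite -[RHS](odd_double_half t) addnC.
Qed.

Definition stern_step (st : nat * nat) (b : bool) : nat * nat :=
  if b then (st.1 + st.2, st.2) else (st.1, st.1 + st.2).

Lemma foldl_stern_step_binval w :
  foldl stern_step (0, 1) w = (stern_a (binval w), stern_a (binval w).+1).
Proof.
elim/last_ind: w => [|w [] IH] //; rewrite foldl_rcons IH binval_rcons /=.
- by rewrite addn1 stern_a_odd -doubleS stern_a_even.
- by rewrite addn0 stern_a_odd stern_a_even.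
Qed.

Lemma stern_s_binval w : stern_s (binval w) = (foldl stern_step (0, 1) w).2.
Proof. by rewrite foldl_stern_step_binval. Qed.

Fixpoint fib n := if n is (m.+1 as m1).+1 then fib m + fib m1 else n.

Lemma fibSS n : fib n.+2 = fib n + fib n.+1. Proof. by []. Qed.

Lemma fib_leS n : fib n <= fib n.+1.
Proof. by case: n => [|n] //; rewrite fibSS leq_addl. Qed.

Lemma leq_fib : {homo fib : m n / m <= n}.
Proof. by apply: homo_leq => //; [exact: leq_trans | exact: fib_leS]. Qed.

Lemma fib_add m n : fib (m + n).+1 = fib m.+1 * fib n.+1 + fib m * fib n.
Proof.
elim: m n => [|m IH] n; first by rewrite add0n mul1n mul0n addn0.
by rewrite addSnnS IH !fibSS; lia.
Qed.

Lemma fib_gt0 n : 0 < fib n.+1.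
Proof. by elim: n => [|n IH] //; rewrite fibSS addn_gt0 IH orbT. Qed.

Lemma fib_double_lt k : fib k.*2 < fib k.*2.+1.
Proof. by case: k => [|k] //; rewrite doubleS (fibSS k.*2.+1); have := fib_gt0 k.*2; lia. Qed.

Lemma fib_double_le k : 3 * fib k.*2 <= 2 * fib k.*2.+1.
Proof.
case: k => [|k] //; rewrite doubleS (fibSS k.*2.+1) (fibSS k.*2).
by have := fib_leS k.*2; lia.
Qed.

Lemma fib_add5 n : fib (n + 5) = 3 * fib n + 5 * fib n.+1.
Proof. by rewrite !addnS addn0 !fibSS; lia. Qed.

Lemma max_foldl_stern_step_le w p q :
  maxn (foldl stern_step (p, q) w).1 (foldl stern_step (p, q) w).2
    <= fib (size w).+1 * maxn p q + fib (size w) * minn p q.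
Proof.
elim: w p q => [|b w IH] p q; first by rewrite /=; lia.
rewrite [foldl _ _ _]/= [size _]/= fibSS.
have step_le p' q' : maxn p' q' = maxn p q + minn p q -> minn p' q' <= maxn p q ->
    fib (size w).+1 * maxn p' q' + fib (size w) * minn p' q'
      <= (fib (size w) + fib (size w).+1) * maxn p q + fib (size w).+1 * minn p q.
  by move=> -> /(leq_mul (leqnn (fib (size w)))); lia.
by case: b; apply: leq_trans (IH _ _) (step_le _ _ _ _) => /=; lia.
Qed.

Lemma foldl_stern_step_snd_le w p q :
  (foldl stern_step (p, q) w).2 <= fib (size w).+1 * maxn p q + fib (size w) * minn p q.
Proof. exact: leq_trans (leq_maxr _ _) (max_foldl_stern_step_le _ _ _). Qed.

Lemma stern_s_le_fib i L : i < 2 ^ L -> stern_s i <= fib L.+1.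
Proof.
move=> i_lt; rewrite -(binrepK i) stern_s_binval.
apply: leq_trans (foldl_stern_step_snd_le _ _ _) _.
by rewrite muln1 muln0 addn0 leq_fib // ltnS size_binrep_le.
Qed.

Definition alt10 j := flatten (nseq j [:: true; false]).

Lemma size_alt10 j : size (alt10 j) = j.*2.
Proof. by elim: j => [|j IH] //; rewrite /alt10 /= -/(alt10 j) IH doubleS. Qed.

Lemma alt10S j : alt10 j.+1 = [:: true, false & alt10 j]. Proof. by []. Qed.

Lemma foldl_stern_step_10 p q w :
  foldl stern_step (p, q) [:: true, false & w] = foldl stern_step (p + q, p + q + q) w.
Proof. by []. Qed.

Lemma foldl_stern_step_alt10_fib a j :
  foldl stern_step (fib a.*2, fib a.*2.+1) (alt10 j) = (fib (a + j).*2, fib (a + j).*2.+1).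
Proof.
elim: j a => [|j IH] a; first by rewrite addn0.
by rewrite alt10S foldl_stern_step_10 -fibSS addnC -fibSS -!doubleS IH addSnnS.
Qed.

Definition a1000 k := fib k.*2.+1 + 3 * fib k.*2.
Definition s1000 k := fib k.*2 + 4 * fib k.*2.+1.

Lemma foldl_stern_step_10_s1000 k w :
  foldl stern_step (a1000 k, s1000 k) [:: true, false & w]
  = foldl stern_step (a1000 k.+1, s1000 k.+1) w.
Proof.
rewrite foldl_stern_step_10 /a1000 /s1000 doubleS !fibSS.
by congr (foldl _ (_, _)); lia.
Qed.

Lemma foldl_stern_step_alt10 k j :
  foldl stern_step (a1000 k, s1000 k) (alt10 j) = (a1000 (k + j), s1000 (k + j)).
Proof.
elim: j k => [|j IH] k; first by rewrite addn0.
by rewrite alt10S foldl_stern_step_10_s1000 IH addSnnS.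
Qed.

Lemma foldl_stern_step_w1000 n : foldl stern_step (0, 1) (w1000 n) = (a1000 n, s1000 n).
Proof. by rewrite foldl_cat; exact: foldl_stern_step_alt10 0 n. Qed.



Lemma fib_lt_s1000 k : fib (k.*2 + 4) < s1000 k.
Proof. by rewrite /s1000 !addnS addn0 !fibSS; have := fib_double_lt k; lia. Qed.

Lemma foldl_stern_step_0_le_fib k j w : size w = j.*2.+1 ->
  (foldl stern_step (a1000 k, s1000 k) (false :: w)).2 <= fib ((k + j).+1.*2 + 4).
Proof.
move=> size_w.
have -> : foldl stern_step (a1000 k, s1000 k) (false :: w)
        = foldl stern_step (a1000 k, a1000 k + s1000 k) w by [].
apply: leq_trans (foldl_stern_step_snd_le _ _ _) _.
rewrite size_w (maxn_idPr (leq_addr _ _)) (minn_idPl (leq_addr _ _)).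
have -> : (k + j).+1.*2 + 4 = (j.*2 + k.*2).+1 + 5 by lia.
rewrite fib_add5 fib_add -addSn fib_add fibSS /a1000 /s1000.
have := fib_leS j.*2; have := fib_double_le k.
set u := fib j.*2; set u1 := fib j.*2.+1; set v := fib k.*2; set v1 := fib k.*2.+1.
move=> v_le u_le.
have uv_le : u * v <= u1 * v by rewrite leq_mul2r u_le orbT.
have := leq_mul (leqnn u1) v_le.
nia.
Qed.

Lemma foldl_stern_step_11_le_s1000 k j w : size w = j.*2 ->
  (foldl stern_step (a1000 k, s1000 k) [:: true, true & w]).2 <= s1000 (k + j.+1).
Proof.
move=> size_w.
have -> : foldl stern_step (a1000 k, s1000 k) [:: true, true & w]
        = foldl stern_step (a1000 k + s1000 k + s1000 k, s1000 k) w by [].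
apply: leq_trans (foldl_stern_step_snd_le _ _ _) _.
rewrite size_w (maxn_idPl (leq_addl _ _)) (minn_idPr (leq_addl _ _)).
rewrite /a1000 /s1000 (_ : (k + j.+1).*2 = (j.*2 + k.*2).+2); last by lia.
rewrite (fibSS (j.*2 + k.*2).+1) fib_add -addSn fib_add fibSS.
nia.
Qed.

Lemma foldl_stern_step_le_s1000 k j w : size w = j.*2 ->
  (foldl stern_step (a1000 k, s1000 k) w).2 <= s1000 (k + j) /\
  (binval w < binval (alt10 j) ->
     (foldl stern_step (a1000 k, s1000 k) w).2 <= fib ((k + j).*2 + 4)).
Proof.
elim: j k w => [|j IH] k w size_w.
  by move/size0nil: size_w => ->; rewrite addn0.
case: w size_w => [|b1 [|b2 w]] //; rewrite doubleS => -[size_w].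
have alt_lt := binval_lt (alt10 j); rewrite size_alt10 in alt_lt.
have -> : binval [:: b1, b2 & w] = binval [:: b1; b2] * 2 ^ j.*2 + binval w.
  by rewrite -size_w -binval_cat.
rewrite alt10S (binval_cat [:: true; false]) size_alt10 (_ : binval [:: true; false] = 2) //.
case: b1; [case: b2 |].
- split; first exact: foldl_stern_step_11_le_s1000.
  by rewrite (_ : binval [:: true; true] = 3) //; lia.
- rewrite foldl_stern_step_10_s1000 -addSnnS (_ : binval [:: true; false] = 2) //.
  have [le_s lt_fib] := IH k.+1 w size_w.
  by split=> // lt_alt; apply: lt_fib; lia.
- have le_fib := @foldl_stern_step_0_le_fib k j (b2 :: w) ltac:(by rewrite /= size_w).
  rewrite addnS; split=> [|_]; last exact: le_fib.
  exact: ltnW (leq_ltn_trans le_fib (fib_lt_s1000 _)).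
Qed.

Lemma binval_w1000 n : binval (w1000 n) = 8 * 2 ^ n.*2 + binval (alt10 n).
Proof. by rewrite /w1000 -/(alt10 n) binval_cat size_alt10. Qed.

Lemma binrep_w1000 n : binrep (binval (w1000 n)) = w1000 n.
Proof. exact: binvalK_true. Qed.

Lemma stern_s_w1000 n : stern_s (binval (w1000 n)) = s1000 n.
Proof. by rewrite stern_s_binval foldl_stern_step_w1000. Qed.

Lemma stern_s_1000_block n t : t < 2 ^ n.*2 ->
  stern_s (8 * 2 ^ n.*2 + t) <= s1000 n /\
  (t < binval (alt10 n) -> stern_s (8 * 2 ^ n.*2 + t) <= fib (n.*2 + 4)).
Proof.
move=> t_lt; have -> : 8 * 2 ^ n.*2 + t = binval ([:: true; false; false; false] ++ bits n.*2 t).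
  by rewrite binval_cat size_bits bitsK.
rewrite stern_s_binval foldl_cat.
by have := @foldl_stern_step_le_s1000 0 n _ (size_bits n.*2 t); rewrite bitsK.
Qed.

Lemma stern_s_eq_fib_below n : exists2 i, i < 8 * 2 ^ n.*2 & stern_s i = fib (n.*2 + 4).
Proof.
exists (binval (rcons (alt10 n.+1) false)).
  by have := binval_lt (rcons (alt10 n.+1) false); rewrite size_rcons size_alt10 doubleS !expnS; lia.
rewrite stern_s_binval foldl_rcons (foldl_stern_step_alt10_fib 0) add0n.
rewrite -[(stern_step _ false).2]/(fib n.+1.*2 + fib n.+1.*2.+1) -fibSS.
by congr fib; lia.
Qed.

Lemma binrep_prefix1000_range v m : size (binrep v) = m + 4 ->
  prefix [:: true; false; false; false] (binrep v) -> 8 * 2 ^ m <= v < 9 * 2 ^ m.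
Proof.
move=> size_v /prefixP [r def_v].
have size_r : size r = m by move: size_v; rewrite def_v size_cat /=; lia.
rewrite -(binrepK v) def_v binval_cat size_r (_ : binval _ = 8) //.
by have := binval_lt r; rewrite size_r; lia.
Qed.

Lemma record_setter_w1000 n : record_setter (binval (w1000 n)).
Proof.
move=> i; rewrite stern_s_w1000 binval_w1000 => i_lt.
apply: leq_ltn_trans _ (fib_lt_s1000 n).
have [i_lt8|i_ge8] := ltnP i (8 * 2 ^ n.*2).
  by rewrite addnS; apply: stern_s_le_fib; rewrite expnD mulnC.
have alt_lt := binval_lt (alt10 n); rewrite size_alt10 in alt_lt.
have [_ ] := stern_s_1000_block n (i - 8 * 2 ^ n.*2) ltac:(lia).
by rewrite subnKC //; apply; lia.
Qed.

Lemma not_record_setter_below_w1000 n v :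
  8 * 2 ^ n.*2 <= v < binval (w1000 n) -> ~ record_setter v.
Proof.
rewrite binval_w1000 => /andP [v_ge v_lt] record_v.
have alt_lt := binval_lt (alt10 n); rewrite size_alt10 in alt_lt.
have [i i_lt s_i] := stern_s_eq_fib_below n.
have [_ ] := stern_s_1000_block n (v - 8 * 2 ^ n.*2) ltac:(lia).
rewrite subnKC // => /(_ ltac:(lia)); rewrite -s_i.
by apply/negP; rewrite -ltnNge; apply: record_v; lia.
Qed.

Lemma not_record_setter_above_w1000 n v :
  binval (w1000 n) < v < 9 * 2 ^ n.*2 -> ~ record_setter v.
Proof.
move=> /andP [v_gt v_lt] record_v.
have := record_v _ v_gt; rewrite stern_s_w1000 binval_w1000 in v_gt *.
have [+ _] := stern_s_1000_block n (v - 8 * 2 ^ n.*2) ltac:(lia).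
by rewrite subnKC; lia.
Qed.

Theorem mainTheorem15 (n : nat) :
  (forall v, record_setter v -> size (binrep v) = 2 * n + 4 ->
     prefix [:: true; false; false; false] (binrep v) ->
     v = binval (w1000 n)) /\
  record_setter (binval (w1000 n)) /\
  size (binrep (binval (w1000 n))) = 2 * n + 4 /\
  prefix [:: true; false; false; false] (binrep (binval (w1000 n))) /\
  (forall v, record_setter v -> size (binrep v) = 2 * n + 4 ->
     binval (w1000 n) <= v).
Proof.
rewrite mul2n binrep_w1000; split; [|split; [|split; [|split]]].
- move=> v record_v size_v /(binrep_prefix1000_range v n.*2 size_v) /andP [v_ge v_lt].
  case: (ltngtP v (binval (w1000 n))) => // [v_lt'|v_gt].
  + by case: (not_record_setter_below_w1000 n v); rewrite ?v_ge.
  + by case: (not_record_setter_above_w1000 n v); rewrite ?v_gt.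
- exact: record_setter_w1000.
- by rewrite size_cat size_alt10 addnC.
- exact: prefix_prefix.
- move=> v record_v; rewrite addnS leqNgt => size_v; apply/negP => v_lt.
  have /andP [v_ge _] := binrep_size_range v (n.*2 + 3) size_v.
  apply: (not_record_setter_below_w1000 n v) => //.
  by rewrite v_lt andbT; rewrite expnD mulnC in v_ge.
Qed.
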